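(* For a barcode $f$ with $n \ge 1$ bars, $\Delta(f^{\wedge p})$ for any integer $p \ge 1$ can be obtained from $n$ and $C(f^{\wedge n})$: if $f, f'$ are barcodes both with exactly $n\ge1$ bars and $C(f^{\wedge n}) = C(f'^{\wedge n})$, then $\Delta(f^{\wedge p}) = \Delta(f'^{\wedge p})$ for all $p\ge1$.
   Context: A barcode is a finite formal sum $f = \sum_{i=1}^n x^{\alpha_i}y^{\ell_i}$ with $\alpha_i \in \mathbb{R}$, $\ell_i \in \mathbb{R}_{>0}$ (a multiset of $n$ bars). Its $p$-th exterior power ($p\ge1$) is $f^{\wedge p} = \sum_{1\le i_1<\cdots<i_p\le n} x^{\alpha_{i_1}+\cdots+\alpha_{i_p}}y^{\min\{\ell_{i_1},\ldots,\ell_{i_p}\}}$ (zero if $p>n$). The critical series is $C(f) = \sum_i x^{\alpha_i} - \sum_i x^{\alpha_i+\ell_i}$ (a finite integer combination of symbols $x^g$, $g\in\mathbb{R}$), and the drift is $\Delta(f) = \sum_{i=1}^n \alpha_i$. *)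

From HB Require Import structures.
From mathcomp Require Import all_boot all_order all_algebra.
From mathcomp Require Import reals.
Set Implicit Arguments. Unset Strict Implicit. Unset Printing Implicit Defensive.
Import Order.TTheory GRing.Theory Num.Theory.
Local Open Scope ring_scope.

Section Barcodes.
Variable R : realType.

(* A barcode sum_i x^{alpha_i} y^{l_i} is represented by the finite sequence
   (a multiset, order irrelevant) of its bars (alpha_i, l_i). *)
Definition barcode := seq (R * R).

Definition wf_barcode (f : barcode) : bool := all (fun b => 0 < b.2) f.

Definition seqmin (s : seq R) : R := \big[Num.min/head 0 s]_(x <- s) x.

(* p-th exterior power: one bar for each p-element subset S of the index set,
   with position sum_{i in S} alpha_i and length min_{i in S} l_i.
   (For p > size f the index set is empty, i.e. the result is zero.) *)
Definition ext_pow (p : nat) (f : barcode) : barcode :=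
  [seq (\sum_(i in A) (nth (0, 0) f i).1,
        seqmin [seq (nth (0, 0) f i).2 | i : 'I_(size f) <- enum A])
  | A : {set 'I_(size f)} <- enum [set S : {set 'I_(size f)} | #|S| == p]].

(* Critical series C(f) = sum_i x^{alpha_i} - sum_i x^{alpha_i + l_i},
   a finite formal Z-combination of symbols x^g, represented by its
   coefficient function g |-> coefficient of x^g. *)
Definition crit (f : barcode) : R -> int := fun g =>
  (count (fun b => b.1 == g) f)%:Z - (count (fun b => b.1 + b.2 == g) f)%:Z.

Definition drift (f : barcode) : R := \sum_(b <- f) b.1.

End Barcodes.

(* By symmetry every bar of f lies in the same number c(n,p) of p-element
   index sets, so the drift of f^p is c(n,p) times the drift of f.  The top
   power f^n is the single bar x^(drift f) y^l with l > 0, whose critical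
   series x^(drift f) - x^(drift f + l) is the only term with coefficient 1;
   hence C(f^n) determines drift f. *)
From HB Require Import structures.
From mathcomp Require Import all_boot all_order all_algebra.
From mathcomp Require Import reals.
From mathcomp Require Import fingroup perm.
Set Implicit Arguments. Unset Strict Implicit. Unset Printing Implicit Defensive.
Import Order.TTheory GRing.Theory Num.Theory.
Local Open Scope ring_scope.

(* The marked index [k] is a [nat], not an ['I_m], so that the count can be
   stated without an inhabitant of ['I_m]; it is meaningful only for [k < m]. *)
Definition card_psets_with (m p k : nat) : nat :=
  #|[set A : {set 'I_m} | (#|A| == p) && [exists x in A, val x == k]]|.

Lemma card_psets_with_le m p (i j : 'I_m) :
  (#|[set A : {set 'I_m} | (#|A| == p) && (i \in A)]| <=
   #|[set A : {set 'I_m} | (#|A| == p) && (j \in A)]|)%N.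
Proof.
pose swap (A : {set 'I_m}) := [set tperm i j x | x in A].
have swap_inj : injective swap by apply: imset_inj; apply: perm_inj.
rewrite -(card_imset _ swap_inj); apply: subset_leq_card.
apply/subsetP => B /imsetP [A]; rewrite !inE => /andP [/eqP cardA iA] ->.
rewrite /swap card_imset ?cardA ?eqxx /=; last exact: perm_inj.
by apply/imsetP; exists i => //; rewrite tpermL.
Qed.

Lemma card_psets_withE m p (i : 'I_m) :
  #|[set A : {set 'I_m} | (#|A| == p) && (i \in A)]| = card_psets_with m p 0.
Proof.
case: m i => [|m] i; first by case: i.
rewrite /card_psets_with.
have -> : [set A : {set 'I_m.+1} | (#|A| == p) && [exists x in A, val x == 0%N]]
        = [set A : {set 'I_m.+1} | (#|A| == p) && (ord0 \in A)].
  apply/setP => A; rewrite !inE; congr (_ && _).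
  apply/existsP/idP => [[x /andP [xA /eqP x0]]|A0]; last by exists ord0; rewrite A0.
  by rewrite (_ : ord0 = x) //; apply: val_inj.
by apply/eqP; rewrite eqn_leq !card_psets_with_le.
Qed.

Section Barcodes.
Variable R : realType.
Implicit Types (f : barcode R) (s : seq R).

Lemma drift_ext_pow p f :
  drift (ext_pow p f) = (card_psets_with (size f) p 0)%:R * drift f.
Proof.
rewrite /drift /ext_pow big_map big_enum /=.
have -> : \sum_(b <- f) b.1 = \sum_(i < size f) (nth (0, 0) f i).1.
  by rewrite (big_nth (0, 0)) big_mkord.
under eq_bigr do rewrite big_mkcond /=.
rewrite exchange_big /= mulr_sumr; apply: eq_bigr => i _.
rewrite -big_mkcondr /= sumr_const -(card_psets_withE p i) mulr_natl.
by congr (_ *+ _); rewrite -[RHS]cardsE; apply: eq_card => A; rewrite [in LHS]unfold_in !inE.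
Qed.

Lemma seqmin_gt0 s : s != [::] -> all (fun x => 0 < x) s -> 0 < seqmin s.
Proof.
case: s => [//|x s] _ /= /andP [x_gt0 s_gt0]; rewrite /seqmin /= big_seq.
apply: (big_ind (fun y => 0 < y)) => //; first by move=> u v u0 v0; rewrite lt_min u0 v0.
by move=> y; rewrite inE => /orP [/eqP -> //|ys]; apply: (allP s_gt0).
Qed.

Lemma ext_pow_top f : wf_barcode f -> (0 < size f)%N ->
  exists2 l, 0 < l & ext_pow (size f) f = [:: (drift f, l)].
Proof.
move=> wf f_gt0; rewrite /ext_pow.
have -> : [set S : {set 'I_(size f)} | #|S| == size f] = [set setT].
  apply/setP => S; rewrite !inE eqEcard subsetT /= cardsT card_ord.
  by have := max_card (mem S); rewrite card_ord eqn_leq => ->.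
rewrite enum_set1 /=; eexists; last first.
  congr [:: (_, _)]; rewrite /drift (big_nth (0, 0)) big_mkord.
  by apply: eq_bigl => i; rewrite inE.
apply: seqmin_gt0; first by rewrite -size_eq0 size_map -cardE cardsT card_ord -lt0n.
by apply/allP => _ /mapP [i _ ->]; apply: (allP wf); apply: mem_nth.
Qed.

Lemma crit_bar (a l g : R) : crit [:: (a, l)] g = (a == g)%:Z - (a + l == g)%:Z.
Proof. by rewrite /crit /= !addn0. Qed.

Lemma crit_bar_eq1 (a l g : R) : l != 0 -> (crit [:: (a, l)] g == 1) = (a == g).
Proof.
move=> l0; rewrite crit_bar; have [<-|_] := eqVneq a g; last by case: (_ == g).
suff -> : (a + l == a) = false by [].
by apply/negbTE; rewrite -subr_eq0 addrAC subrr add0r.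
Qed.

End Barcodes.

Theorem proposition10 (R : realType) (n : nat) (f f' : barcode R) :
  wf_barcode f -> wf_barcode f' ->
  size f = n -> size f' = n -> (1 <= n)%N ->
  crit (ext_pow n f) = crit (ext_pow n f') ->
  forall p : nat, (1 <= p)%N -> drift (ext_pow p f) = drift (ext_pow p f').
Proof.
move=> wf wf' sf sf' n_gt0 eq_crit p _.
rewrite !drift_ext_pow sf sf'; congr (_ * _).
have [l l_gt0 top] : exists2 l, 0 < l & ext_pow (size f) f = [:: (drift f, l)].
  by apply: ext_pow_top; rewrite ?sf.
have [l' l'_gt0 top'] : exists2 l, 0 < l & ext_pow (size f') f' = [:: (drift f', l)].
  by apply: ext_pow_top; rewrite ?sf'.
move: eq_crit; rewrite -{1}sf -sf' top top' => /(congr1 (fun c => c (drift f) == 1)).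
rewrite (crit_bar_eq1 _ _ (lt0r_neq0 l_gt0)) (crit_bar_eq1 _ _ (lt0r_neq0 l'_gt0)).
by rewrite eqxx => /esym/eqP.
Qed.
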